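(* If $\Sigma \cup \{x\} \vdash P$ and $v \not\in \Sigma$, then $\Sigma \cup \{v\} \vdash P[v/x]$.
   Context: lqCCS is a quantum process calculus whose processes are built from: discard $\mathbf{0}_{\tilde e}$ (a deadlocked process keeping ownership of the qubits $\tilde e$), $\tau.P$, superoperator application $\mathcal{E}(\tilde e).P$, measurement $M(\tilde e \triangleright x).P$ (measure the qubits $\tilde e$ and bind the classical outcome to $x$), input $c?x.P$, asynchronous output $c!e$, sum $P+Q$, parallel composition $P \parallel Q$, restriction $P \setminus c$, and if-then-else. Typing judgments have the form $\Sigma \vdash P$, where $\Sigma$ is a set of qubit names, used linearly: a qubit name enters $\Sigma$ only by being sent ($\{e\} \vdash c!e$ for a quantum channel $c$) or discarded ($\Sigma \vdash \mathbf{0}_{\tilde e}$ with $\tilde e$ an enumeration of $\Sigma$); a parallel composition $P_1 \parallel P_2$ is typed by $\Sigma_1 \cup \Sigma_2$ only if $\Sigma_1 \vdash P_1$, $\Sigma_2 \vdash P_2$ and $\Sigma_1 \cap \Sigma_2 = \emptyset$; receiving a qubit on a quantum channel, $c?x.P$, is typed by $\Sigma$ when $\Sigma \cup \{x\} \vdash P$; superoperators and measurements may only act on qubits in the current $\Sigma$. Here $x$ is a quantum variable, $v$ a qubit name, and $P[v/x]$ denotes the substitution of $v$ for $x$ in $P$. *)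

From Stdlib Require Import List Arith.
Import ListNotations.

Definition qvar := nat.
Definition qname := nat.
Definition cvar := nat.
Definition chan := nat.
Definition superop := nat.
Definition measurement := nat.

Inductive qexp : Type :=
| QV (x : qvar)
| QN (v : qname).

Inductive cexp : Type :=
| CVar (y : cvar)
| CConst (n : nat)
| COp (op : nat -> nat -> nat) (a b : cexp).

Inductive proc : Type :=
| Discard (l : list qexp)
| Tau (P : proc)
| SupOp (E : superop) (l : list qexp) (P : proc)
| Meas (M : measurement) (l : list qexp) (y : cvar) (P : proc)
| QIn (c : chan) (x : qvar) (P : proc)
| CIn (c : chan) (y : cvar) (P : proc)
| QOut (c : chan) (e : qexp)
| COut (c : chan) (e : cexp)
| Sum (P Q : proc)
| Par (P Q : proc)
| Res (P : proc) (c : chan)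
| Ite (b : cexp) (P Q : proc).

Definition qset := qexp -> Prop.
Definition qadd (S : qset) (e : qexp) : qset := fun e' => S e' \/ e' = e.

(* Linear typing judgment  S |- P, relative to the classification
   [qch c = true] iff c is a quantum channel. *)
Inductive typed (qch : chan -> bool) : qset -> proc -> Prop :=
| T_Discard : forall S l,
    NoDup l -> (forall e, S e <-> In e l) -> typed qch S (Discard l)
| T_Tau : forall S P, typed qch S P -> typed qch S (Tau P)
| T_SupOp : forall S E l P,
    (forall e, In e l -> S e) -> typed qch S P -> typed qch S (SupOp E l P)
| T_Meas : forall S M l y P,
    (forall e, In e l -> S e) -> typed qch S P -> typed qch S (Meas M l y P)
| T_QIn : forall S c x P,
    qch c = true -> ~ S (QV x) -> typed qch (qadd S (QV x)) P ->
    typed qch S (QIn c x P)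
| T_CIn : forall S c y P,
    qch c = false -> typed qch S P -> typed qch S (CIn c y P)
| T_QOut : forall S c e,
    qch c = true -> (forall e', S e' <-> e' = e) -> typed qch S (QOut c e)
| T_COut : forall S c e,
    qch c = false -> (forall e', ~ S e') -> typed qch S (COut c e)
| T_Sum : forall S P Q, typed qch S P -> typed qch S Q -> typed qch S (Sum P Q)
| T_Par : forall S S1 S2 P1 P2,
    typed qch S1 P1 -> typed qch S2 P2 ->
    (forall e, ~ (S1 e /\ S2 e)) ->
    (forall e, S e <-> S1 e \/ S2 e) ->
    typed qch S (Par P1 P2)
| T_Res : forall S P c, typed qch S P -> typed qch S (Res P c)
| T_Ite : forall S b P Q,
    typed qch S P -> typed qch S Q -> typed qch S (Ite b P Q).

Definition subst_qexp (v : qname) (x : qvar) (e : qexp) : qexp :=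
  match e with
  | QV y => if Nat.eqb y x then QN v else e
  | QN _ => e
  end.

Fixpoint subst (v : qname) (x : qvar) (P : proc) : proc :=
  match P with
  | Discard l => Discard (map (subst_qexp v x) l)
  | Tau P => Tau (subst v x P)
  | SupOp E l P => SupOp E (map (subst_qexp v x) l) (subst v x P)
  | Meas M l y P => Meas M (map (subst_qexp v x) l) y (subst v x P)
  | QIn c y P => if Nat.eqb y x then QIn c y P else QIn c y (subst v x P)
  | CIn c y P => CIn c y (subst v x P)
  | QOut c e => QOut c (subst_qexp v x e)
  | COut c e => COut c e
  | Sum P Q => Sum (subst v x P) (subst v x Q)
  | Par P Q => Par (subst v x P) (subst v x Q)
  | Res P c => Res (subst v x P) c
  | Ite b P Q => Ite b (subst v x P) (subst v x Q)
  end.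

(* Substituting v for x acts on typing contexts as the renaming [subst_qexp v x],
   and typing survives this renaming whenever it is injective on the context:
   injectivity is exactly what keeps discarded lists duplicate-free and the two
   halves of a parallel composition disjoint.  When QV x is in the context,
   injectivity amounts to QN v not being in it, and the renamed context of
   S + {x} is then S + {v}. *)
From Stdlib Require Import List Arith.

Definition qimage (f : qexp -> qexp) (T : qset) : qset :=
  fun e' => exists2 e, T e & f e = e'.

Definition inj_on (f : qexp -> qexp) (T : qset) : Prop :=
  forall a b, T a -> T b -> f a = f b -> a = b.

Lemma typed_ext qch S S' P :
  (forall e, S e <-> S' e) -> typed qch S P -> typed qch S' P.
Proof.
  intros HS H; revert S' HS.
  induction H; intros S' HS; econstructor; eauto;
    try (intros z ?; apply HS; auto);
    try (intro z; rewrite <- HS; auto).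
  - rewrite <- HS; auto.
  - apply IHtyped; intro z; unfold qadd; rewrite HS; tauto.
Qed.

Section Image.

Variable f : qexp -> qexp.

Lemma inj_on_sub (T T' : qset) :
  (forall e, T' e -> T e) -> inj_on f T -> inj_on f T'.
Proof. intros Hsub Hinj a b Ha Hb; apply Hinj; auto. Qed.

Lemma inj_on_qadd (T : qset) e :
  inj_on f T -> (forall a, T a -> f a = f e -> a = e) -> inj_on f (qadd T e).
Proof.
  intros Hinj He a b [Ha | ->] [Hb | ->] Hab; auto.
  symmetry; auto.
Qed.

Lemma qimage_qadd (T : qset) e e' :
  qimage f (qadd T e) e' <-> qadd (qimage f T) (f e) e'.
Proof.
  split.
  - intros [a [Ha | ->] <-]; [left; exists a | right]; auto.
  - intros [[a Ha <-] | ->]; [exists a | exists e]; unfold qadd; auto.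
Qed.

Lemma qimage_list (T : qset) l :
  (forall e, T e <-> In e l) -> forall e', qimage f T e' <-> In e' (map f l).
Proof.
  intros HT e'; rewrite in_map_iff; split.
  - intros [a Ha <-]; exists a; split; [|apply HT]; auto.
  - intros (a & <- & Ha); exists a; [apply HT|]; auto.
Qed.

Lemma qimage_union (T T1 T2 : qset) :
  (forall e, T e <-> T1 e \/ T2 e) ->
  forall e', qimage f T e' <-> qimage f T1 e' \/ qimage f T2 e'.
Proof.
  intros HT e'; split.
  - intros [a Ha <-]; apply HT in Ha as [Ha | Ha]; [left | right]; exists a; auto.
  - intros [[a Ha <-] | [a Ha <-]]; exists a; auto; apply HT; auto.
Qed.

Lemma qimage_disjoint (T T1 T2 : qset) :
  inj_on f T -> (forall e, ~ (T1 e /\ T2 e)) ->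
  (forall e, T e <-> T1 e \/ T2 e) ->
  forall e, ~ (qimage f T1 e /\ qimage f T2 e).
Proof.
  intros Hinj Hdisj HT e [[a Ha <-] [b Hb Hab]].
  assert (b = a) by (apply Hinj; auto; apply HT; auto).
  subst; apply (Hdisj a); auto.
Qed.

End Image.

Lemma qexp_eq_dec (a b : qexp) : {a = b} + {a <> b}.
Proof. decide equality; apply Nat.eq_dec. Qed.

Section Substitution.

Variables (v : qname) (x : qvar).

Lemma subst_qexp_QV_self : subst_qexp v x (QV x) = QN v.
Proof. simpl; rewrite Nat.eqb_refl; reflexivity. Qed.

Lemma subst_qexp_id e : e <> QV x -> subst_qexp v x e = e.
Proof.
  destruct e as [y | w]; simpl; auto.
  destruct (Nat.eqb_spec y x); congruence.
Qed.

Lemma subst_qexp_eq_QV y e : y <> x -> subst_qexp v x e = QV y -> e = QV y.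
Proof.
  intros Hyx; destruct e as [z | w]; simpl; [|discriminate].
  destruct (Nat.eqb_spec z x); congruence.
Qed.

Lemma subst_qexp_inj_on (T : qset) :
  ~ (T (QV x) /\ T (QN v)) -> inj_on (subst_qexp v x) T.
Proof.
  intros Hvx a b Ha Hb.
  destruct (qexp_eq_dec a (QV x)) as [-> | Hax];
  destruct (qexp_eq_dec b (QV x)) as [-> | Hbx]; auto.
  - rewrite subst_qexp_QV_self, subst_qexp_id by assumption.
    intros <-; tauto.
  - rewrite subst_qexp_QV_self, subst_qexp_id by assumption.
    intros ->; tauto.
  - rewrite !subst_qexp_id; auto.
Qed.

Lemma qimage_subst_fresh (T : qset) e :
  ~ T (QV x) -> qimage (subst_qexp v x) T e <-> T e.
Proof.
  intros Hx; split.
  - intros [a Ha <-]; rewrite subst_qexp_id; auto; congruence.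
  - intros He; exists e; auto; apply subst_qexp_id; congruence.
Qed.

Lemma typed_subst qch T P :
  typed qch T P -> inj_on (subst_qexp v x) T ->
  typed qch (qimage (subst_qexp v x) T) (subst v x P).
Proof.
  set (f := subst_qexp v x).
  induction 1 as [T l Hl HT | | T E l P Hl | T M l y P Hl | T c y P Hc Hy HP IHP
                 | | T c e Hc HT | T c e Hc HT | | T T1 T2 P1 P2 _ IH1 _ IH2 Hdisj HT
                 | |]; intros Hinj; simpl; try (constructor; auto; fail).
  - constructor; [|apply qimage_list; auto].
    apply NoDup_map_NoDup_ForallPairs; auto.
    intros a b Ha Hb; apply Hinj; apply HT; auto.
  - constructor; auto.
    intros e' (a & <- & Ha)%in_map_iff; exists a; auto.
  - constructor; auto.
    intros e' (a & <- & Ha)%in_map_iff; exists a; auto.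
  - destruct (Nat.eqb_spec y x) as [-> | Hyx].
    (* The binder shadows x: nothing is substituted, and QV x is not in T. *)
    + apply typed_ext with T; [intro; symmetry; apply qimage_subst_fresh; auto|].
      constructor; auto.
    + assert (Hfy : f (QV y) = QV y) by (apply subst_qexp_id; congruence).
      assert (Hpre : forall a, f a = QV y -> a = QV y)
        by (intros a; apply subst_qexp_eq_QV; auto).
      constructor; auto.
      * intros [a Ha Hay]; apply Hy; rewrite <- (Hpre a Hay); auto.
      * apply typed_ext with (qimage f (qadd T (QV y))).
        -- intro; rewrite qimage_qadd, Hfy; reflexivity.
        -- apply IHP, inj_on_qadd; auto.
           intros a _; rewrite Hfy; auto.
  - constructor; auto.
    intro e'; split.
    + intros [a Ha <-]; apply HT in Ha; subst; auto.
    + intros ->; exists e; auto; apply HT; auto.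
  - constructor; auto.
    intros e' [a Ha _]; apply (HT a); auto.
  - apply T_Par with (qimage f T1) (qimage f T2).
    + apply IH1, inj_on_sub with T; auto; intros; apply HT; auto.
    + apply IH2, inj_on_sub with T; auto; intros; apply HT; auto.
    + apply qimage_disjoint with T; auto.
    + apply qimage_union; auto.
Qed.

End Substitution.

Theorem lemmaB1 (qch : chan -> bool) (S : qset) (x : qvar) (v : qname) (P : proc) :
  ~ S (QV x) ->
  typed qch (qadd S (QV x)) P ->
  ~ S (QN v) ->
  typed qch (qadd S (QN v)) (subst v x P).
Proof.
  intros Hx HP Hv.
  apply typed_ext with (qimage (subst_qexp v x) (qadd S (QV x))).
  - intro e.
    rewrite qimage_qadd, subst_qexp_QV_self.
    unfold qadd; rewrite qimage_subst_fresh by assumption; reflexivity.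
  - apply typed_subst; auto.
    apply subst_qexp_inj_on; intros [_ [HSv | Hvx]]; [auto | discriminate].
Qed.
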